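(* For every type $\tau\in\mathbb{T}_C$, the type $\bigcap\mathbb{P}(\tau)$ is organized and $\bigcap\mathbb{P}(\tau)=\tau$.
   Context: Types $\mathbb{T}_C\ni\tau ::= a\mid\alpha\mid\omega\mid\tau_1\to\tau_2\mid\tau_1\cap\tau_2\mid c(\tau)$ ($a$ constants, $\alpha$ type variables, $c$ unary constructors). Subtyping $\le$: least preorder with $\sigma\le\omega$; $\omega\le\omega\to\omega$; $\sigma\cap\tau\le\sigma$; $\sigma\cap\tau\le\tau$; $\sigma\le\tau_1,\sigma\le\tau_2\Rightarrow\sigma\le\tau_1\cap\tau_2$; $(\sigma\to\tau_1)\cap(\sigma\to\tau_2)\le\sigma\to\tau_1\cap\tau_2$; $\sigma_2\le\sigma_1,\tau_1\le\tau_2\Rightarrow\sigma_1\to\tau_1\le\sigma_2\to\tau_2$; $\tau_1\le\tau_2\Rightarrow c(\tau_1)\le c(\tau_2)$; $c(\tau_1)\cap c(\tau_2)\le c(\tau_1\cap\tau_2)$; $=$ means $\le$ in both directions. Paths: $\pi ::= a\mid\alpha\mid\sigma\to\pi\mid c(\omega)\mid c(\pi)$. $\mathbb{P}(a)=\{a\}$, $\mathbb{P}(\alpha)=\{\alpha\}$, $\mathbb{P}(\omega)=\emptyset$, $\mathbb{P}(\sigma\to\tau)=\{\sigma\to\pi\mid\pi\in\mathbb{P}(\tau)\}$, $\mathbb{P}(\sigma\cap\tau)=\mathbb{P}(\sigma)\cup\mathbb{P}(\tau)$, $\mathbb{P}(c(\tau))=\{c(\omega)\}$ if $\mathbb{P}(\tau)=\emptyset$,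 else $\{c(\pi)\mid\pi\in\mathbb{P}(\tau)\}$. A type is organized if it is of the form $\bigcap_{i\in I}\pi_i$ with all $\pi_i$ paths. $\bigcap\mathbb{P}(\tau)$ denotes $\pi_1\cap\cdots\cap\pi_n$ where $\mathbb{P}(\tau)=\{\pi_1,\ldots,\pi_n\}$, and $\omega$ if $\mathbb{P}(\tau)=\emptyset$. *)

From Stdlib Require Import List.
Import ListNotations.
Set Implicit Arguments.

Section Types.
(* A : type constants a, V : type variables alpha, C : unary constructors c *)
Variables (A V C : Type).

Inductive ty : Type :=
| TConst : A -> ty
| TVar   : V -> ty
| TOmega : ty
| TArrow : ty -> ty -> ty
| TInter : ty -> ty -> ty
| TCtor  : C -> ty -> ty.

Inductive sub : ty -> ty -> Prop :=
| sub_refl  : forall s, sub s s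
| sub_trans : forall s t u, sub s t -> sub t u -> sub s u
| sub_omega : forall s, sub s TOmega
| sub_omega_arrow : sub TOmega (TArrow TOmega TOmega)
| sub_inter_l : forall s t, sub (TInter s t) s
| sub_inter_r : forall s t, sub (TInter s t) t
| sub_glb : forall s t1 t2, sub s t1 -> sub s t2 -> sub s (TInter t1 t2)
| sub_arrow_inter : forall s t1 t2,
    sub (TInter (TArrow s t1) (TArrow s t2)) (TArrow s (TInter t1 t2))
| sub_arrow : forall s1 s2 t1 t2, sub s2 s1 -> sub t1 t2 ->
    sub (TArrow s1 t1) (TArrow s2 t2)
| sub_ctor : forall c t1 t2, sub t1 t2 -> sub (TCtor c t1) (TCtor c t2)
| sub_ctor_inter : forall c t1 t2,
    sub (TInter (TCtor c t1) (TCtor c t2)) (TCtor c (TInter t1 t2)).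

Definition ty_eq (s t : ty) : Prop := sub s t /\ sub t s.

Inductive is_path : ty -> Prop :=
| path_const : forall a, is_path (TConst a)
| path_var : forall x, is_path (TVar x)
| path_arrow : forall s p, is_path p -> is_path (TArrow s p)
| path_ctor_omega : forall c, is_path (TCtor c TOmega)
| path_ctor : forall c p, is_path p -> is_path (TCtor c p).

(* P(tau), as a list enumerating the set of paths *)
Fixpoint paths (t : ty) : list ty :=
  match t with
  | TConst a => [TConst a]
  | TVar x => [TVar x]
  | TOmega => []
  | TArrow s u => map (TArrow s) (paths u)
  | TInter s u => paths s ++ paths u
  | TCtor c u =>
      match paths u with
      | [] => [TCtor c TOmega]
      | ps => map (TCtor c) ps
      end
  end.

Fixpoint bigcap (ps : list ty) : ty :=
  match ps with
  | [] => TOmega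
  | [p] => p
  | p :: ps' => TInter p (bigcap ps')
  end.

Definition organized (t : ty) : Prop :=
  exists ps : list ty, Forall is_path ps /\ t = bigcap ps.

End Types.

(* By induction on [t]: intersecting the paths of the components commutes with
   each type former, because [sigma -> _] and [c(_)] distribute over
   intersections.  The degenerate cases are an arrow whose codomain has no
   paths, where [omega <= omega -> omega] gives [sigma -> omega = omega], and a
   constructor applied to a path-free type, which [P] sends to [c(omega)]. *)
From Stdlib Require Import List Setoid Morphisms.

Section Subtyping.

Variables A V C : Type.
Implicit Types s t u p : ty A V C.
Local Notation omega := (TOmega A V C).
Local Notation ty_eq := (@ty_eq A V C).

#[local] Instance sub_preorder : PreOrder (@sub A V C).
Proof. split; [exact (@sub_refl A V C) | exact (@sub_trans A V C)]. Qed.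

#[local] Instance ty_eq_equivalence : Equivalence ty_eq.
Proof.
  split.
  - intro s; split; reflexivity.
  - intros s t [st ts]; split; assumption.
  - intros s t u [st ts] [tu ut]; split; etransitivity; eassumption.
Qed.

#[local] Instance TInter_proper : Proper (ty_eq ==> ty_eq ==> ty_eq) (@TInter A V C).
Proof.
  intros s s' [ss' s's] t t' [tt' t't]; split; apply sub_glb;
    eauto using sub_trans, sub_inter_l, sub_inter_r.
Qed.

#[local] Instance TArrow_proper : Proper (ty_eq ==> ty_eq ==> ty_eq) (@TArrow A V C).
Proof. intros s s' [ss' s's] t t' [tt' t't]; split; apply sub_arrow; assumption. Qed.

#[local] Instance TCtor_proper c : Proper (ty_eq ==> ty_eq) (@TCtor A V C c).
Proof. intros t t' [tt' t't]; split; apply sub_ctor; assumption. Qed.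

Lemma inter_omega_l t : ty_eq (TInter omega t) t.
Proof.
  split; [apply sub_inter_r | apply sub_glb; [apply sub_omega | reflexivity]].
Qed.

Lemma inter_omega_r t : ty_eq (TInter t omega) t.
Proof.
  split; [apply sub_inter_l | apply sub_glb; [reflexivity | apply sub_omega]].
Qed.

Lemma inter_assoc s t u : ty_eq (TInter s (TInter t u)) (TInter (TInter s t) u).
Proof.
  split; repeat apply sub_glb;
    eauto using sub_trans, sub_inter_l, sub_inter_r.
Qed.

Lemma arrow_omega s : ty_eq (TArrow s omega) omega.
Proof.
  split; [apply sub_omega |].
  transitivity (TArrow omega omega);
    [apply sub_omega_arrow | apply sub_arrow; [apply sub_omega | reflexivity]].
Qed.

Lemma arrow_inter s t u : ty_eq (TInter (TArrow s t) (TArrow s u)) (TArrow s (TInter t u)).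
Proof.
  split; [apply sub_arrow_inter |].
  apply sub_glb; apply sub_arrow; auto using sub_refl, sub_inter_l, sub_inter_r.
Qed.

Lemma ctor_inter c t u : ty_eq (TInter (TCtor c t) (TCtor c u)) (TCtor c (TInter t u)).
Proof.
  split; [apply sub_ctor_inter |].
  apply sub_glb; apply sub_ctor; auto using sub_inter_l, sub_inter_r.
Qed.

Lemma bigcap_cons p ps : ty_eq (bigcap (p :: ps)) (TInter p (bigcap ps)).
Proof. destruct ps; [symmetry; apply inter_omega_r | reflexivity]. Qed.

Lemma bigcap_app ps qs : ty_eq (bigcap (ps ++ qs)) (TInter (bigcap ps) (bigcap qs)).
Proof.
  induction ps as [|p ps IH]; simpl app.
  - symmetry; apply inter_omega_l.
  - rewrite !bigcap_cons, IH; apply inter_assoc.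
Qed.

Lemma bigcap_map_arrow s ps : ty_eq (bigcap (map (TArrow s) ps)) (TArrow s (bigcap ps)).
Proof.
  induction ps as [|p ps IH]; simpl map.
  - symmetry; apply arrow_omega.
  - rewrite !bigcap_cons, IH; apply arrow_inter.
Qed.

Lemma bigcap_map_ctor c p ps :
  ty_eq (bigcap (map (TCtor c) (p :: ps))) (TCtor c (bigcap (p :: ps))).
Proof.
  revert p; induction ps as [|q ps IH]; intro p; [reflexivity |].
  change (ty_eq (TInter (TCtor c p) (bigcap (map (TCtor c) (q :: ps))))
                (TCtor c (TInter p (bigcap (q :: ps))))).
  rewrite IH; apply ctor_inter.
Qed.

Lemma paths_is_path t : Forall (@is_path A V C) (paths t).
Proof.
  induction t as [a | x | | s _ u IHu | s IHs u IHu | c u IHu]; simpl.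
  - repeat constructor.
  - repeat constructor.
  - constructor.
  - apply Forall_map; eapply Forall_impl; [apply path_arrow | exact IHu].
  - apply Forall_app; split; assumption.
  - destruct (paths u) as [|p ps].
    + repeat constructor.
    + change (Forall (@is_path A V C) (map (TCtor c) (p :: ps))).
      apply Forall_map; eapply Forall_impl; [apply path_ctor | exact IHu].
Qed.

Lemma bigcap_paths t : ty_eq (bigcap (paths t)) t.
Proof.
  induction t as [a | x | | s _ u IHu | s IHs u IHu | c u IHu]; simpl;
    try reflexivity.
  - rewrite bigcap_map_arrow, IHu; reflexivity.
  - rewrite bigcap_app, IHs, IHu; reflexivity.
  - destruct (paths u) as [|p ps].
    + rewrite <- IHu; reflexivity.
    + change (ty_eq (bigcap (map (TCtor c) (p :: ps))) (TCtor c u)).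
      rewrite bigcap_map_ctor, IHu; reflexivity.
Qed.

End Subtyping.

Theorem lemma4p8 (A V C : Type) (t : ty A V C) :
  organized (bigcap (paths t)) /\ ty_eq (bigcap (paths t)) t.
Proof.
  split.
  - exists (paths t); split; [apply paths_is_path | reflexivity].
  - apply bigcap_paths.
Qed.
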